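(* Let $k\ge 3$ and let $c_1\ge c_2\ge\dots\ge c_k>0$ be constants with $\sum_{i=1}^k c_i=1$. For every $n$ such that all $c_i n$ are integers, let $G_n$ be the complete $k$-partite graph with parts $V_1,\dots,V_k$, $|V_i|=c_i n$. Then: (i) if $c_2\le \tfrac12(1-c_1)$, $\mathrm{RC}(G_n)=n+c_1n-1$; (ii) if $c_2> \tfrac12(1-c_1)$, $\mathrm{RC}(G_n)=2(n-c_2n)$.
   Context: Robot crawler model: let $G=(V,E)$ be a finite connected simple graph with $|V|=n$. An initial weighting is a bijection $w_0:V\to\{-n,-n+1,\dots,-1\}$. At time $1$ the crawler visits $w_0^{-1}(-n)$. If the crawler visits vertex $v$ at time $t$, then $w_t(v)=t$ and $w_t(u)=w_{t-1}(u)$ for all $u\neq v$. If $\min_{y\in V}w_t(y)>0$, the process stops and $\mathcal{RC}(G,w_0):=t$. Otherwise, at time $t+1$ the crawler moves to the neighbour $u$ of $v$ minimising $w_t(u)$ (the weights are distinct, so this is well defined). A vertex is ''cleaned'' at the first time it is visited. With $\Omega_n$ the set of all $n!$ initial weightings, $\mathrm{rc}(G)=\min_{w_0\in\Omega_n}\mathcal{RC}(G,w_0)$, $\mathrm{RC}(G)=\max_{w_0\in\Omega_n}\mathcal{RC}(G,w_0)$, and $\overline{\mathrm{rc}}(G)=\mathbb{E}\,\mathcal{RC}(G,\overline{w_0})$ where $\overline{w_0}$ is uniformly distributed on $\Omega_n$. A complete $k$-partite graph with parts $V_1,\dots,V_k$ has an edge between $u$ and $v$ if and only if $u,v$ lie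 in different parts. *)

From HB Require Import structures.
From mathcomp Require Import all_boot all_order all_algebra.
Set Implicit Arguments. Unset Strict Implicit. Unset Printing Implicit Defensive.
Import Order.TTheory GRing.Theory Num.Theory.
Local Open Scope ring_scope.

Section Crawler.
Variables (T : finType) (e : rel T).

(* An initial weighting: a bijection T -> {-n,...,-1}, n = #|T|
   (injective into a set of size n, hence bijective). *)
Definition is_weighting (w0 : T -> int) : Prop :=
  injective w0 /\ forall v, - (#|T|%:Z) <= w0 v <= -1.

(* The element of P minimising w (unique when w is injective). *)
Definition argmin_on (P : pred T) (w : T -> int) : option T :=
  [pick u | P u && [forall y, P y ==> (w u <= w y)]].

(* crawl w0 t = (w_t, vertex visited at time t); time 0 = before start. *)
Fixpoint crawl (w0 : T -> int) (t : nat) : (T -> int) * option T :=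
  match t with
  | 0%N => (w0, None)
  | t'.+1 =>
      let (w, p) := crawl w0 t' in
      let next := match p with
                  | None => argmin_on predT w          (* time 1: vertex of weight -n *)
                  | Some x => argmin_on (e x) w
                  end in
      match next with
      | Some v => (fun y => if y == v then (t'.+1)%:Z else w y, Some v)
      | None => (w, p)
      end
  end.

Definition all_clean (w0 : T -> int) (t : nat) : bool :=
  [forall y, 0 < (crawl w0 t).1 y].

Definition RC_run (w0 : T -> int) (t : nat) : Prop :=
  all_clean w0 t /\ forall s, (s < t)%N -> ~~ all_clean w0 s.

(* RC(G) = m : m is the maximum of RC(G,w0) over all initial weightings
   (in particular the process stops for every weighting). *)
Definition RC_is (m : nat) : Prop :=
  (forall w0, is_weighting w0 -> exists2 t, RC_run w0 t & (t <= m)%N) /\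
  (exists2 w0, is_weighting w0 & RC_run w0 m).

End Crawler.

Definition multipartite_rel (T : finType) (part : T -> nat) : rel T :=
  fun u v => part u != part v.

From HB Require Import structures.
From mathcomp Require Import all_boot all_order all_algebra.
From mathcomp Require Import zify lra.
Import Order.TTheory GRing.Theory Num.Theory.
Set Implicit Arguments. Unset Strict Implicit.

(* Write V_q for the parts, largest first, and n for the number of vertices.
   Upper bound: while the dirty vertices meet at least two parts, the crawler
   always has a dirty neighbour, so every step cleans a new vertex.  Once they
   all lie in one part V_p, say d of them at time n - d, the crawler has to
   leave V_p after each of them, which ends the run at time n + d - 1.  Hence
   the run takes at most n + |V_p| - 1 <= n + |V_0| - 1 steps, and, since
   consecutive visits to a part are impossible, cleaning all of V_q (q <> p)
   before time n - d forces 2|V_q| <= n - d + 1, so the run also takes at most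
   2(n - |V_q|) <= 2(n - |V_1|) steps.
   Lower bound: for t0 = max(n - |V_0|, 2|V_1| - 1), the vertices outside V_0
   together with t0 - (n - |V_0|) vertices of V_0 can be arranged so that
   consecutive ones lie in different parts, ending outside V_0 (greedily,
   always taking a vertex of a largest remaining part).  Weighting the
   vertices in this order followed by the rest of V_0, the crawler follows
   the arrangement and then needs 2(n - t0) - 1 more steps, for a total of
   min(n + |V_0| - 1, 2(n - |V_1|)).  With |V_0| = c_1 n and |V_1| = c_2 n,
   the minimum is the first term exactly when c_2 <= (1 - c_1)/2. *)

Section Arrangements.
Variables (T : finType) (part : T -> nat).
Local Notation cnt l s := (count (fun v => part v == l) s).

Lemma count_part_disjoint l q s : l != q -> (cnt l s + cnt q s <= size s)%N.
Proof.
move=> lq; rewrite -count_predUI [count (predI _ _) _](eq_count (a2 := pred0)).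
  by rewrite count_pred0 addn0 count_size.
by move=> v /=; case: eqP => // ->; apply/negbTE.
Qed.

(* Greedy: start with a vertex of a largest part other than [f]. *)
Lemma alternating_perm s f :
  (forall l, 2 * cnt l s <= (size s).+1)%N -> (2 * cnt f s <= size s)%N ->
  exists r, [/\ perm_eq r s, sorted (multipartite_rel part) r &
    (if r is x :: _ then part x != f else True)].
Proof.
move: {2}(size s) (erefl (size s)) => N; elim: N s f => [|N IH] s f size_s cnt_le cnt_f_le.
  by exists [::]; case: s size_s cnt_le cnt_f_le.
have [x0 x0s x0f] : exists2 x0, x0 \in s & part x0 != f.
  apply/hasP; rewrite has_count lt0n; apply: contraTneq cnt_f_le => h0.
  by move: (count_predC (fun v => part v == f) s); rewrite h0 size_s addn0; lia.
pose P x := (x \in s) && (part x != f).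
have [x /andP[xs xf] xmax] := @arg_maxnP T x0 P (fun x => cnt (part x) s)
  (introT andP (conj x0s x0f)).
have ps : perm_eq s (x :: rem x s) := perm_to_rem xs.
have cs l : cnt l s = ((part x == l) + cnt l (rem x s))%N by rewrite (permP ps).
have size_s' : size (rem x s) = N by rewrite size_rem // size_s.
have [r [pr sr hr]] : exists r, [/\ perm_eq r (rem x s),
    sorted (multipartite_rel part) r &
    (if r is y :: _ then part y != part x else True)].
  apply: IH => // [l|]; rewrite size_s'; last by have := cnt_le (part x); rewrite cs eqxx size_s /=; lia.
  have [->|lx] := eqVneq l (part x); first by have := cnt_le (part x); rewrite cs eqxx size_s /=; lia.
  have -> : cnt l (rem x s) = cnt l s by rewrite cs eq_sym (negbTE lx).
  have [->|lf] := eqVneq l f; first by move: cnt_f_le; rewrite size_s; lia.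
  case: (posnP (cnt l s)) => [-> //|]; rewrite -has_count => /hasP[y ys /eqP yl].
  have := xmax y; rewrite /P ys yl lf => /(_ isT) hle.
  by have := count_part_disjoint s lx; rewrite size_s; lia.
exists (x :: r); split => //.
- by rewrite perm_sym (perm_trans ps) // perm_cons perm_sym.
- by case: r sr hr {pr} => //= y r -> hr; rewrite andbT /multipartite_rel eq_sym.
Qed.
Local Notation n := #|T|.
Local Notation V q := [set v : T | part v == q].

Lemma card_part l : #|V l| = cnt l (enum T).
Proof.
rewrite cardsE cardE /enum_mem size_filter count_filter.
by apply: eq_count => x; rewrite /= andbT.
Qed.

Lemma card_parts012 : (#|V 0| + #|V 1| + #|V 2| <= n)%N.
Proof.
rewrite !card_part cardT; elim: (enum T) => //= x s IH.
by case: (part x) => [|[|[|m]]] /=; lia.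
Qed.

Lemma count_part_prefix j l : (j <= #|V 0|)%N ->
  cnt l ([seq v <- enum T | part v != 0] ++ take j [seq v <- enum T | part v == 0])
  = if l == 0 then j else #|V l|.
Proof.
move=> le_j; rewrite count_cat card_part count_filter.
have Z0 v : v \in take j [seq v <- enum T | part v == 0] -> part v = 0.
  by move/mem_take; rewrite mem_filter => /andP[/eqP].
have [->|l0] := eqVneq l 0.
  rewrite [count _ (enum T)](eq_count (a2 := pred0)) => [|v]; last by rewrite /= andbN.
  rewrite count_pred0 [count _ (take _ _)](eq_in_count (a2 := predT)) => [|v /Z0 ->] //.
  by rewrite count_predT size_takel // size_filter -card_part.
rewrite [count _ (take _ _)](eq_in_count (a2 := pred0)) => [|v /Z0 ->].
  by rewrite count_pred0 addn0; apply: eq_count => v /=; case: eqP => // ->.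
by rewrite eq_sym (negbTE l0).
Qed.

Lemma multipartite_order (x0 : T) (t0 : nat) :
  (0 < t0)%N -> (n - #|V 0| <= t0 < n)%N -> (t0 <= 2 * (n - #|V 0|))%N ->
  (forall l, l != 0 -> 2 * #|V l| <= t0.+1)%N ->
  exists full, [/\ perm_eq full (enum T),
    forall i, (i.+1 < t0)%N -> part (nth x0 full i) != part (nth x0 full i.+1),
    forall i, (t0 <= i < n)%N -> part (nth x0 full i) = 0 &
    part (nth x0 full t0.-1) != 0].
Proof.
move=> t0_gt0 /andP[le_t0 t0_lt] t0_le hl.
set j := (t0 - (n - #|V 0|))%N.
pose Z := [seq v <- enum T | part v == 0].
pose O := [seq v <- enum T | part v != 0].
have sZ : size Z = #|V 0| by rewrite size_filter card_part.
have sO : size O = (n - #|V 0|)%N.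
  by rewrite size_filter card_part cardT -(count_predC (fun v => part v == 0)) addKn.
have Z0 v : v \in Z -> part v = 0 by rewrite mem_filter => /andP[/eqP].
pose s := O ++ take j Z.
have ss : size s = t0 by rewrite size_cat sO size_takel ?sZ /j; lia.
have cnt_s l : cnt l s = if l == 0 then j else #|V l|.
  by apply: count_part_prefix; rewrite /j; lia.
have [r [pr sr hr]] : exists r, [/\ perm_eq r s,
    sorted (multipartite_rel part) r & (if r is x :: _ then part x != 0 else True)].
  apply: alternating_perm => [l|]; rewrite cnt_s ss ?eqxx /j; last by lia.
  by case: eqP => [_|/eqP /hl //]; lia.
have [x [r' [rE x_not0]]] : exists x r', r = x :: r' /\ part x != 0.
  case: r pr sr hr => [/perm_size size0 _ _|x r' _ _ hx]; last by exists x, r'.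
  by move: t0_gt0; rewrite -ss -size0.
have size_r' : size r' = t0.-1 by rewrite -ss -(perm_size pr) rE.
(* [r] starts outside part 0, so [rev r] ends there, right before the tail. *)
have sorted_rev : sorted (multipartite_rel part) (rev r).
  by rewrite rev_sorted; apply: sub_sorted sr => u v; rewrite /multipartite_rel eq_sym.
exists (rev r ++ drop j Z); split.
- rewrite perm_sym -(perm_filterC (fun v => part v == 0) (enum T)) perm_catC.
  rewrite -[X in _ ++ X](cat_take_drop j Z) catA perm_cat2r perm_sym perm_rev.
  exact: pr.
- move=> i lt_i; rewrite !nth_cat size_rev (perm_size pr) ss lt_i ltnW //.
  by apply: (sortedP x0 sorted_rev); rewrite size_rev (perm_size pr) ss.
- move=> i /andP[le_i lt_i]; rewrite nth_cat size_rev (perm_size pr) ss ltnNge le_i /=.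
  by apply: Z0; apply: (mem_drop (n0 := j)); apply: mem_nth; rewrite size_drop sZ /j; lia.
- by rewrite nth_cat rE rev_cons size_rcons size_rev -size_r' ltnSn nth_rcons size_rev ltnn eqxx.
Qed.

End Arrangements.

Lemma all_clean_RC_run (T : finType) (e : rel T) w0 s :
  all_clean e w0 s -> exists2 t, RC_run e w0 t & (t <= s)%N.
Proof.
move=> hs; have ex : exists t, all_clean e w0 t by exists s.
case: (ex_minnP ex) => t Ht Hmin; exists t; last exact: Hmin.
by split => // s' ts'; apply/negP => /Hmin; rewrite leqNgt ts'.
Qed.

Section Crawl.
Local Open Scope ring_scope.
Variables (T : finType) (e : rel T) (w0 : T -> int).
Hypothesis e_total : forall x, exists y, e x y.
Hypothesis T_gt0 : (0 < #|T|)%N.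
Hypothesis w0_lt0 : forall y, w0 y < 0.

Lemma argmin_onP (P : pred T) (w : T -> int) u :
  argmin_on P w = Some u -> P u /\ forall y, P y -> w u <= w y.
Proof.
rewrite /argmin_on; case: pickP => // u' /andP[Pu /forallP H] [<-].
by split => // y Py; exact: (implyP (H y) Py).
Qed.

Lemma argmin_on_some (P : pred T) (w : T -> int) y :
  P y -> exists u, argmin_on P w = Some u.
Proof.
move=> Py; rewrite /argmin_on; case: pickP => [u _|H]; first by exists u.
have [u Pu Hu] := @Order.TotalTheory.arg_minP _ _ _ y P w Py.
move: (H u); rewrite Pu /= => /negP[]; apply/forallP => z.
by apply/implyP => Pz; exact: Hu.
Qed.

Local Notation W t := (crawl e w0 t).1.
Local Notation X t := (crawl e w0 t).2.

Definition crawl_move (t : nat) (v : T) : Prop :=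
  match X t with
  | None => forall y, W t v <= W t y
  | Some x => e x v /\ forall y, e x y -> W t v <= W t y
  end.

Lemma crawlS t : exists v,
  crawl e w0 t.+1 = (fun y => if y == v then (t.+1)%:Z else W t y, Some v)
  /\ crawl_move t v.
Proof.
rewrite /crawl_move /=; case E: (crawl e w0 t) => [w [x|]] /=.
  have [y exy] := e_total x; have [v Hv] := argmin_on_some w exy.
  by rewrite Hv; exists v; split => //; exact: argmin_onP Hv.
have /card_gt0P [y _] := T_gt0.
have [v Hv] := @argmin_on_some predT w y erefl; rewrite Hv.
by exists v; split => // z; have [_ ->] := argmin_onP Hv.
Qed.

Lemma crawl_weight t y : W t y = w0 y \/ 0 < W t y.
Proof.
elim: t y => [|t IH] y; first by left.
have [v [-> _]] := crawlS t; rewrite /=.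
by case: eqP => _; [right | exact: IH].
Qed.

Definition dirty t : {set T} := [set y | W t y < 0].

Lemma dirty0 : dirty 0 = setT.
Proof. by apply/setP => y; rewrite !inE /= w0_lt0. Qed.

Lemma notin_dirty t y : (y \notin dirty t) = (0 < W t y).
Proof.
rewrite inE -leNgt; case: (crawl_weight t y) => [->|Wy]; last by rewrite Wy ltW.
by rewrite [LHS]leNgt w0_lt0 ltNge ltW.
Qed.

Lemma dirty_weight t y : y \in dirty t -> W t y = w0 y.
Proof. by rewrite -[_ \in _]negbK notin_dirty -leNgt; case: (crawl_weight t y) => // /lt_geF ->. Qed.

Lemma all_clean_dirty t : all_clean e w0 t = (dirty t == set0).
Proof.
apply/forallP/eqP => [H|H y]; last by rewrite -notin_dirty H inE.
by apply/setP => y; rewrite in_set0; apply/negbTE; rewrite notin_dirty.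
Qed.

Lemma crawl_posS t : exists v, X t.+1 = Some v.
Proof. by have [v [-> _]] := crawlS t; exists v. Qed.

Lemma crawl_visit t v : X t.+1 = Some v ->
  [/\ W t.+1 = (fun y => if y == v then (t.+1)%:Z else W t y),
      dirty t.+1 = dirty t :\ v & crawl_move t v].
Proof.
have [v' [E H]] := crawlS t; rewrite E /= => -[<-]; split => //.
by apply/setP => y; rewrite /dirty E !inE /=; case: eqP.
Qed.

End Crawl.

Section Multipartite.
Local Open Scope ring_scope.
Variables (T : finType) (part : T -> nat) (w0 : T -> int).
Hypothesis e_total : forall x, exists y, multipartite_rel part x y.
Hypothesis T_gt0 : (0 < #|T|)%N.
Hypothesis w0_lt0 : forall y, w0 y < 0.

Local Notation e := (multipartite_rel part).
Local Notation W t := (crawl e w0 t).1.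
Local Notation X t := (crawl e w0 t).2.
Local Notation dirty := (dirty e w0).
Local Notation n := #|T|.

Lemma crawl_move_dirty t x y v : X t = Some x -> crawl_move e w0 t v ->
  part y != part x -> y \in dirty t -> v \in dirty t /\ part v != part x.
Proof.
move=> Hx; rewrite /crawl_move Hx => -[exv le_v] yx; rewrite !inE => Wy.
have exy : e x y by rewrite /multipartite_rel eq_sym.
by split; [exact: le_lt_trans (le_v _ exy) Wy | rewrite eq_sym].
Qed.

Lemma dirty_visit_card t v : X t.+1 = Some v -> v \in dirty t ->
  #|dirty t| = #|dirty t.+1|.+1.
Proof.
by move=> /(crawl_visit e_total T_gt0) [_ -> _] vD; rewrite (cardsD1 v) vD.
Qed.

Lemma crawl_leave_part t x : X t = Some x ->
  (forall y, y \in dirty t -> part y = part x) ->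
  exists2 v, X t.+1 = Some v & part v != part x /\ dirty t.+1 = dirty t.
Proof.
move=> Hx HD; have [v Hv] := crawl_posS w0 e_total T_gt0 t.
have [_ -> mv] := crawl_visit e_total T_gt0 Hv.
have vx : part v != part x by move: mv; rewrite /crawl_move Hx /e eq_sym => -[].
exists v => //; split => //; apply/setP => z; rewrite in_setD1.
by case: eqP => // ->; apply/esym/negbTE; apply: contra vx => /HD ->.
Qed.

Lemma crawl_clean_one_part d t x p : X t = Some x -> part x != p ->
  (forall y, y \in dirty t -> part y = p) -> #|dirty t| = d ->
  (forall j, (j < (2 * d).-1)%N -> dirty (t + j) != set0) /\
  dirty (t + (2 * d).-1) = set0.
Proof.
elim: d t x => [|d IH] t x Hx px HD Hd.
  by split => //; rewrite addn0; apply/eqP; rewrite -cards_eq0 Hd.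
have /card_gt0P [y yD] : (0 < #|dirty t|)%N by rewrite Hd.
have [v Hv] := crawl_posS w0 e_total T_gt0 t.
have [_ HD1 mv] := crawl_visit e_total T_gt0 Hv.
have yx : part y != part x by rewrite (HD y yD) eq_sym.
have [vD _] := crawl_move_dirty Hx mv yx yD.
have Hd1 : #|dirty t.+1| = d by apply: succn_inj; rewrite -(dirty_visit_card Hv).
have tD : dirty t != set0 by apply/set0Pn; exists y.
have HD1p y' : y' \in dirty t.+1 -> part y' = part v.
  by rewrite HD1 (HD v vD) => /setD1P[_ /HD].
case: d IH Hd1 Hd => [|d] IH Hd1 _.
  split; first by case=> // _; rewrite addn0.
  by rewrite addn1; apply/eqP; rewrite -cards_eq0 Hd1.
have pv : part v = p := HD v vD.
have [v' Hv' [v'p HD2]] := crawl_leave_part Hv HD1p; rewrite pv in v'p.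
have HD2p z : z \in dirty t.+2 -> part z = p by rewrite HD2 -pv => /HD1p.
have Hd2 : #|dirty t.+2| = d.+1 by rewrite HD2.
have [IH1 IH2] := IH t.+2 v' Hv' v'p HD2p Hd2.
split => [[|[|j]] hj|]; first by rewrite addn0.
- by rewrite addn1 -cards_eq0 Hd1.
- by rewrite -addSnnS -addSnnS IH1 //; lia.
- by rewrite (_ : (t + _ = t.+2 + (2 * d.+1).-1)%N) //; lia.
Qed.

Definition clean_in_part q t : {set T} := [set y | (part y == q) && (0 < W t y)].

Definition crawler_in_part q t : bool :=
  if X t is Some x then part x == q else false.

(* Visits to a part are never consecutive, so each clean vertex of part [q]
   accounts for two time steps. *)
Lemma clean_in_part_card q t :
  (2 * #|clean_in_part q t| <= t + crawler_in_part q t)%N.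
Proof.
elim: t => [|t IH].
  rewrite (_ : clean_in_part q 0 = set0) ?cards0 //.
  by apply/setP => y; rewrite !inE /= ltNge (ltW (w0_lt0 y)) andbF.
have [v Hv] := crawl_posS w0 e_total T_gt0 t.
have [HW _ mv] := crawl_visit e_total T_gt0 Hv.
rewrite /crawler_in_part Hv.
have [vq|vq] := boolP (part v == q).
  have sub : clean_in_part q t.+1 \subset v |: clean_in_part q t.
    by apply/subsetP => y; rewrite !inE HW /=; case: (y =P v).
  have notq : crawler_in_part q t = false.
    move: mv; rewrite /crawler_in_part /crawl_move.
    by case: (X t) => // x [xv _]; apply/negbTE; rewrite -(eqP vq).
  move: IH (subset_leq_card sub) (cardsU1 v (clean_in_part q t)).
  by rewrite notq; case: (v \in _) => /=; lia.
have sub : clean_in_part q t.+1 \subset clean_in_part q t.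
  apply/subsetP => y; rewrite !inE HW /=.
  by case: (y =P v) => [->|//]; rewrite (negbTE vq).
by move: IH (subset_leq_card sub); case: (crawler_in_part q t) => /=; lia.
Qed.

Lemma crawl_sweep t x y : X t = Some x -> (t + #|dirty t| = n)%N ->
  y \in dirty t -> part y != part x ->
  exists t0 x0 p, [/\ X t0 = Some x0, (t0 + #|dirty t0| = n)%N,
    (0 < #|dirty t0|)%N, part x0 != p & forall y, y \in dirty t0 -> part y = p].
Proof.
move Hm: #|dirty t| => m; elim: m t x y Hm => [|m IH] t x y Hm Hx Ht yD yx.
  by move/eqP: Hm; rewrite cards_eq0 => /eqP D0; rewrite D0 inE in yD.
have [one_part|] := boolP [forall z in dirty t, part z == part y].
  exists t, x, (part y); split; rewrite ?Hm 1?eq_sym //.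
  by move=> z zD; apply/eqP; exact: (forall_inP one_part).
rewrite negb_forall_in => /exists_inP [z zD zy].
have [v Hv] := crawl_posS w0 e_total T_gt0 t.
have [_ HD1 mv] := crawl_visit e_total T_gt0 Hv.
have [vD _] := crawl_move_dirty Hx mv yx yD.
have Hm1 : #|dirty t.+1| = m by apply: succn_inj; rewrite -Hm (dirty_visit_card Hv).
have Ht1 : (t.+1 + m = n)%N by lia.
have [yv|yv] := eqVneq (part y) (part v).
  apply: (IH t.+1 v z Hm1 Hv Ht1); last by rewrite -yv.
  by rewrite HD1 in_setD1 zD andbT; apply: contraNneq zy => ->; rewrite yv.
apply: (IH t.+1 v y Hm1 Hv Ht1) => //.
by rewrite HD1 in_setD1 yD andbT; apply: contraNneq yv => ->.
Qed.

Local Notation V q := [set v : T | part v == q].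

Lemma crawl_upper : exists s p, [/\ all_clean e w0 s, (s + 1 <= n + #|V p|)%N &
  forall q, q != p -> (2 * #|V q| + s <= 2 * n)%N].
Proof.
have [v1 Hv1] := crawl_posS w0 e_total T_gt0 0.
have [_ HD1 _] := crawl_visit e_total T_gt0 Hv1.
have Hn1 : (1 + #|dirty 1| = n)%N.
  by rewrite HD1 (dirty0 _ w0_lt0) -cardsT (cardsD1 v1 setT) in_setT.
have [y /[dup] ey] := e_total v1; rewrite /multipartite_rel eq_sym => yv1.
have yD1 : y \in dirty 1.
  by rewrite HD1 (dirty0 _ w0_lt0) !inE andbT; apply: contraNneq yv1 => ->.
have [t0 [x0 [p [Hx0 Ht0 dpos x0p HD]]]] := crawl_sweep Hv1 Hn1 yD1 yv1.
have [_ Hclean] := crawl_clean_one_part Hx0 x0p HD (erefl _).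
have clean_other q : q != p -> V q \subset clean_in_part q t0.
  move=> qp; apply/subsetP => z; rewrite !inE => /[dup] zq ->.
  by rewrite -(notin_dirty e_total T_gt0 w0_lt0); apply: contra qp => /HD <-; rewrite eq_sym.
have Dp : dirty t0 \subset V p by apply/subsetP => z /HD; rewrite inE => ->.
exists (t0 + (2 * #|dirty t0|).-1), p; split.
- by rewrite (all_clean_dirty e_total T_gt0 w0_lt0) Hclean.
- by move: Ht0 (subset_leq_card Dp) dpos; lia.
- move=> q qp; have := clean_in_part_card q t0.
  have : (crawler_in_part q t0 <= 1)%N := leq_b1 _.
  by move: (subset_leq_card (clean_other q qp)) Ht0 dpos; lia.
Qed.

End Multipartite.

Section SeqWeighting.
Local Open Scope ring_scope.
Variables (T : finType) (full : seq T).
Hypothesis full_perm : perm_eq full (enum T).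

Definition seq_weighting (v : T) : int := (index v full)%:Z - #|T|%:Z.

Lemma size_full : size full = #|T|.
Proof. by rewrite (perm_size full_perm) cardE. Qed.

Lemma mem_full y : y \in full.
Proof. by rewrite (perm_mem full_perm) mem_enum. Qed.

Lemma uniq_full : uniq full.
Proof. by rewrite (perm_uniq full_perm) enum_uniq. Qed.

Lemma index_full_lt y : (index y full < #|T|)%N.
Proof. by rewrite -size_full index_mem mem_full. Qed.

Lemma seq_weighting_lt0 y : seq_weighting y < 0.
Proof. by rewrite /seq_weighting subr_lt0 ltz_nat index_full_lt. Qed.

Lemma seq_weighting_is_weighting : is_weighting seq_weighting.
Proof.
split=> [y z /addIr /eqP|v]; first by rewrite eqz_nat => /eqP/index_inj->//; exact: mem_full.
by have := index_full_lt v; rewrite /seq_weighting; lia.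
Qed.

End SeqWeighting.

Section CrawlSeq.
Local Open Scope ring_scope.
Variables (T : finType) (part : T -> nat) (full : seq T) (x0 : T) (t0 p : nat).
Hypothesis e_total : forall x, exists y, multipartite_rel part x y.
Hypothesis full_perm : perm_eq full (enum T).
Hypothesis t0_gt0 : (0 < t0)%N.
Hypothesis t0_lt : (t0 < #|T|)%N.
Hypothesis full_alt : forall i, (i.+1 < t0)%N ->
  part (nth x0 full i) != part (nth x0 full i.+1).
Hypothesis full_tail : forall i, (t0 <= i < #|T|)%N -> part (nth x0 full i) = p.
Hypothesis full_last : part (nth x0 full t0.-1) != p.

Local Notation e := (multipartite_rel part).
Local Notation w0 := (seq_weighting full).
Local Notation W t := (crawl e w0 t).1.
Local Notation X t := (crawl e w0 t).2.
Local Notation dirty := (dirty e w0).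
Local Notation n := #|T|.

Let T_gt0 : (0 < n)%N := leq_ltn_trans (leq0n t0) t0_lt.
Let w0_lt0 := seq_weighting_lt0 full_perm.

Lemma index_full_nth i : (i < n)%N -> index (nth x0 full i) full = i.
Proof. by move=> lt_i_n; rewrite index_uniq ?size_full ?uniq_full. Qed.

Lemma card_not_in_take t : (t <= n)%N -> #|~: [set y in take t full]| = (n - t)%N.
Proof.
move=> le_t_n; rewrite cardsCs setCK cardsE.
have /card_uniqP -> := take_uniq t (uniq_full full_perm).
by rewrite size_takel ?size_full.
Qed.

Lemma crawl_follows_seq t : (t <= t0)%N ->
  dirty t = ~: [set y in take t full] /\
  (0 < t -> X t = Some (nth x0 full t.-1))%N.
Proof.
elim: t => [_|t IH le_t_t0].
  by rewrite take0 (dirty0 _ w0_lt0); split => //; apply/setP => y; rewrite !inE.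
have [Dt Xt] := IH (ltnW le_t_t0).
have [v Hv] := crawl_posS w0 e_total T_gt0 t.
have [_ HD mv] := crawl_visit e_total T_gt0 Hv.
set y := nth x0 full t.
have iy : index y full = t by rewrite index_full_nth //; lia.
have yD : y \in dirty t by rewrite Dt !inE in_take ?mem_full // iy ltnn.
have [vD le_vy] : v \in dirty t /\ W t v <= W t y.
  have [t0'|t_gt0] := posnP t.
    by move: mv; rewrite /crawl_move t0' /= (dirty0 _ w0_lt0) inE => ->.
  have xy : part y != part (nth x0 full t.-1).
    by rewrite eq_sym; have := @full_alt t.-1; rewrite prednK //; apply.
  have [vD _] := crawl_move_dirty (Xt t_gt0) mv xy yD.
  by move: mv; rewrite /crawl_move (Xt t_gt0) => -[_ ->] //; rewrite /e eq_sym.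
have mem := mem_full full_perm.
rewrite !(dirty_weight e_total T_gt0 w0_lt0) // /seq_weighting lerD2r lez_nat iy in le_vy.
have iv : index v full = t.
  by apply/eqP; rewrite eqn_leq le_vy; move: vD; rewrite Dt !inE in_take // -leqNgt.
have vy : v = y by rewrite -(nth_index x0 (mem v)) iv.
split=> [|_]; last by rewrite Hv vy.
apply/setP => z; rewrite HD Dt !inE !in_take //.
have [->|zv] := eqVneq z v; first by rewrite iv ltnSn.
rewrite [in RHS]ltnS [in RHS]leq_eqVlt negb_or -iv.
by rewrite (inj_in_eq (index_inj x0 (s := full))) ?mem ?zv.
Qed.

Lemma crawl_seq_run : RC_run e w0 (t0 + (2 * (n - t0)).-1).
Proof.
have [Dt0 Xt0] := crawl_follows_seq (leqnn t0).
have Dt0p y : y \in dirty t0 -> part y = p.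
  rewrite Dt0 !inE in_take ?mem_full // -leqNgt => le_t0_y.
  by rewrite -(nth_index x0 (mem_full full_perm y)) full_tail // le_t0_y index_full_lt.
have Dt0_card : #|dirty t0| = (n - t0)%N by rewrite Dt0 card_not_in_take // ltnW.
have [dirty_before clean_end] := crawl_clean_one_part e_total T_gt0 (Xt0 t0_gt0) full_last Dt0p Dt0_card.
split=> [|s lt_s]; rewrite (all_clean_dirty e_total T_gt0 w0_lt0) ?clean_end //.
have [le_t0_s|lt_s_t0] := leqP t0 s.
  by rewrite -(subnKC le_t0_s) dirty_before //; lia.
have [Ds _] := crawl_follows_seq (ltnW lt_s_t0).
apply/set0Pn; exists (nth x0 full s).
by rewrite Ds !inE in_take ?mem_full // index_full_nth ?ltnn //; lia.
Qed.

End CrawlSeq.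

Lemma crawl_lower (T : finType) (part : T -> nat) (t0 : nat) :
  (forall x, exists y, multipartite_rel part x y) -> (0 < t0)%N ->
  (#|T| - #|[set v | part v == 0%N]| <= t0 < #|T|)%N ->
  (t0 <= 2 * (#|T| - #|[set v | part v == 0%N]|))%N ->
  (forall l, l != 0%N -> 2 * #|[set v | part v == l]| <= t0.+1)%N ->
  exists2 w0, is_weighting w0 &
    RC_run (multipartite_rel part) w0 (t0 + (2 * (#|T| - t0)).-1).
Proof.
move=> e_total t0_gt0 t0_range t0_le parts_le.
have /card_gt0P [x0 _] : (0 < #|T|)%N by case/andP: t0_range; lia.
have [full [full_perm alt tail last]] := multipartite_order x0 t0_gt0 t0_range t0_le parts_le.
exists (seq_weighting full); first exact: seq_weighting_is_weighting.
by apply: crawl_seq_run alt tail last => //; case/andP: t0_range.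
Qed.

Section CompleteMultipartite.
Variables (T : finType) (part : T -> nat).
Local Notation e := (multipartite_rel part).
Local Notation n := #|T|.
Local Notation a q := #|[set v : T | part v == q]|.
Hypothesis a_anti : forall i j, (i <= j)%N -> (a j <= a i)%N.
Hypothesis a1_gt0 : (0 < a 1)%N.
Hypothesis a01_lt : (a 0 + a 1 < n)%N.

Let T_gt0 : (0 < n)%N := leq_ltn_trans (leq0n _) a01_lt.
Let a0_max q : (a q <= a 0)%N := a_anti (leq0n q).
Let a1_max q : q != 0%N -> (a q <= a 1)%N. Proof. by rewrite -lt0n; exact: a_anti. Qed.

Lemma multipartite_total x : exists y, e x y.
Proof.
have /card_gt0P [v0] : (0 < a 0)%N := leq_trans a1_gt0 (a0_max 1).
have /card_gt0P [v1] := a1_gt0.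
rewrite !inE /e /multipartite_rel => /eqP v1E /eqP v0E.
by have [x0|] := eqVneq (part x) 0; [exists v1; rewrite x0 v1E | exists v0; rewrite v0E].
Qed.

Lemma crawl_upper_min w0 : is_weighting w0 ->
  exists2 t, RC_run e w0 t & (t <= minn (n + a 0 - 1) (2 * (n - a 1)))%N.
Proof.
move=> [_ w0_range]; have w0_lt0 y : (w0 y < 0)%R by case/andP: (w0_range y) => _ /le_lt_trans->.
have [s [p [s_clean s_le a_le]]] := crawl_upper multipartite_total T_gt0 w0_lt0.
have [t t_run le_t_s] := all_clean_RC_run s_clean; exists t => //.
have := a0_max p; case: (eqVneq p 1%N) s_le a_le => [->|p1] s_le a_le.
  by have := a0_max 1; have := a_le 0%N isT; lia.
by have := a_le 1%N; rewrite eq_sym p1 => /(_ isT); lia.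
Qed.

Lemma crawl_lower_min : exists2 w0, is_weighting w0 &
  RC_run e w0 (minn (n + a 0 - 1) (2 * (n - a 1))).
Proof.
pose t0 := maxn (n - a 0) (2 * a 1 - 1).
have hl l : l != 0%N -> (2 * a l <= t0.+1)%N by move=> /a1_max; rewrite /t0; lia.
have [|||w0 w0_weighting w0_run] := crawl_lower multipartite_total (t0 := t0) _ _ _ hl.
1-3: by have := a0_max 1; rewrite /t0; lia.
exists w0; rewrite // (_ : minn _ _ = t0 + (2 * (n - t0)).-1)%N //.
by have := a0_max 1; rewrite /t0; lia.
Qed.

Theorem RC_is_multipartite : RC_is e (minn (n + a 0 - 1) (2 * (n - a 1))).
Proof. by split; [exact: crawl_upper_min | exact: crawl_lower_min]. Qed.

End CompleteMultipartite.

Section Densities.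
Local Open Scope ring_scope.
Variables (k : nat) (c : nat -> rat) (T : finType) (part : T -> nat).
Local Notation a q := #|[set v : T | part v == q]|.
Hypothesis part_lt : forall v, (part v < k)%N.
Hypothesis a_density : forall i, (i < k)%N -> (a i)%:R = c i * (#|T|)%:R.

Lemma card_part_ge i j : (forall i j, (i <= j < k)%N -> c j <= c i) ->
  (i <= j)%N -> (a j <= a i)%N.
Proof.
move=> c_anti le_ij; have [lt_jk|le_kj] := ltnP j k; last first.
  rewrite (_ : a j = 0%N) //; apply/eqP; rewrite cards_eq0; apply/eqP/setP => v.
  by rewrite !inE; apply/negbTE; apply: contraTneq (part_lt v) => ->; rewrite -leqNgt.
rewrite -(ler_nat rat) !a_density ?(leq_ltn_trans le_ij) //.
by rewrite ler_wpM2r ?ler0n // c_anti // le_ij.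
Qed.

Lemma card_part_gt0 i : (0 < c i) -> (0 < #|T|)%N -> (i < k)%N -> (0 < a i)%N.
Proof. by move=> c_gt0 T_gt0 lt_ik; rewrite -(ltr_nat rat) a_density // mulr_gt0 ?ltr0n. Qed.

End Densities.

Local Open Scope ring_scope.

Theorem theorem2 (k : nat) (hk : (3 <= k)%N) (c : nat -> rat)
  (hpos : forall i, (i < k)%N -> 0 < c i)
  (hdec : forall i j, (i <= j < k)%N -> c j <= c i)
  (hsum : \sum_(i < k) c i = 1)
  (T : finType) (hn : (0 < #|T|)%N) (part : T -> nat)
  (hpart : forall v, (part v < k)%N)
  (hsize : forall i, (i < k)%N -> (#|[set v | part v == i]|)%:R = c i * (#|T|)%:R) :
  (c 1%N <= (1 - c 0%N) / 2 ->
     exists2 m : nat, RC_is (multipartite_rel part) m &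
       m%:R = (#|T|)%:R + c 0%N * (#|T|)%:R - 1) /\
  (c 1%N > (1 - c 0%N) / 2 ->
     exists2 m : nat, RC_is (multipartite_rel part) m &
       m%:R = 2 * ((#|T|)%:R - c 1%N * (#|T|)%:R)).
Proof.
have a_ge i j := card_part_ge hpart hsize (i := i) (j := j) hdec.
have a_gt0 i (lt_ik : (i < k)%N) := card_part_gt0 hsize (hpos i lt_ik) hn lt_ik.
have a01_lt : (#|[set v | part v == 0%N]| + #|[set v | part v == 1%N]| < #|T|)%N.
  by have := card_parts012 part; have := a_gt0 2%N hk; lia.
have RC := RC_is_multipartite a_ge (a_gt0 1%N (ltnW hk)) a01_lt.
have E0 := hsize 0%N (ltnW (ltnW hk)); have E1 := hsize 1%N (ltnW hk).
move: RC a01_lt E0 E1 (a_gt0 0%N (ltnW (ltnW hk))) (a_ge 0%N 1%N isT).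
set n := #|T|; set a0 := #|_|; set a1 := #|_| => RC a01_lt E0 E1 a0_gt0 a10.
have n_gt0 : 0 < n%:R :> rat by rewrite ltr0n.
split=> c1_bound; exists (minn (n + a0 - 1) (2 * (n - a1))) => //.
- have : (2 * a1 + a0 <= n)%N by rewrite -(ler_nat rat) natrD natrM E0 E1; nra.
  by move=> small; rewrite (minn_idPl _) ?natrB ?natrD ?E0 //; lia.
- have : (n < 2 * a1 + a0)%N by rewrite -(ltr_nat rat) natrD natrM E0 E1; nra.
  by move=> large; rewrite (minn_idPr _) ?natrM ?natrB ?E1 //; lia.
Qed.
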